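(* Let $J\subseteq E$ and let $F\subseteq E\setminus J$ be obtained by picking, for every $b\in B$, a set of $r^J_b$ edges of $E\setminus J$ incident to $b$ of minimal cost at $b$ (i.e. the $r^J_b$ edges $e$ with smallest $c_e^b$). Then $J\cup F$ is an $r$-edge-cover, and: (i) $\ell_F(B)\le\mathsf{opt}$; (ii) $\ell_F(A)\le\theta\cdot\Phi(J)$.
   Context: Bipartite Activation Edge-Multicover: the input is a bipartite multigraph $G=(A\cup B,E)$, where each edge is written $e=ab$ with $a\in A$, $b\in B$ and has non-negative activation costs $c_e^a,c_e^b$, and non-negative integer requirements $r=\{r_b: b\in B\}$. For $J\subseteq E$ and a node $v$, $\delta_J(v)$ is the set of edges of $J$ incident to $v$, $\deg_J(v)=|\delta_J(v)|$, $\ell_J(v)=\max\{c_e^v: e\in\delta_J(v)\}$ (max over the empty set is $0$), and $\ell_J(U)=\sum_{v\in U}\ell_J(v)$. $J$ is an $r$-edge-cover if $\deg_J(b)\ge r_b$ for all $b\in B$. $\mathsf{opt}$ is the minimum of $\ell_J(A\cup B)$ over $r$-edge-covers $J$ (the instance is assumed feasible). The slope is $\theta=\max_{e=ab\in E}\frac{\max\{c_e^a,c_e^b\}}{\min\{c_e^a,c_e^b\}}$. For $b\in B$, $w_b$ is the $r_b$-th smallest of the values $c_e^b$ over edges $e\in E$ incident to $b$ (with multiplicity), $w_b=0$ if $r_b=0$. Residual requirement $r^J_b=\max\{r_b-\deg_J(b),0\}$, potential $\Phi(J)=\sum_{b\in B}w_b r^J_b$. *)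

(* Bipartite multigraph G = (A u B, E): A, B, E finite types,
   each edge e has endpoints ea e \in A and eb e \in B (parallel edges allowed). *)
From HB Require Import structures.
From mathcomp Require Import all_boot all_order all_algebra.
Set Implicit Arguments. Unset Strict Implicit. Unset Printing Implicit Defensive.
Import Order.TTheory GRing.Theory Num.Theory.
Local Open Scope ring_scope.

Section Activation.
Variables (R : realFieldType) (A B E : finType) (ea : E -> A) (eb : E -> B).
Variables (ca cb : E -> R) (r : B -> nat).

Definition degB (J : {set E}) (b : B) : nat := #|[set e in J | eb e == b]|.

Definition is_cover (J : {set E}) : Prop := forall b, (r b <= degB J b)%N.

Definition ellA_at (J : {set E}) (a : A) : R :=
  \big[Num.max/0]_(e in J | ea e == a) ca e.
Definition ellB_at (J : {set E}) (b : B) : R :=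
  \big[Num.max/0]_(e in J | eb e == b) cb e.
Definition ellA (J : {set E}) : R := \sum_(a : A) ellA_at J a.
Definition ellB (J : {set E}) : R := \sum_(b : B) ellB_at J b.
Definition cost (J : {set E}) : R := ellA J + ellB J.

(* opt = min of l_J(A u B) over r-edge-covers J; the default value cost setT
   is itself attained when the instance is feasible (setT is a cover). *)
Definition opt : R :=
  \big[Num.min/cost setT]_(J : {set E} | [forall b, (r b <= degB J b)%N]) cost J.

(* w_b : r_b-th smallest value c_e^b over edges e incident to b (with
   multiplicity), 0 if r_b = 0 *)
Definition wB (b : B) : R :=
  if r b == 0%N then 0
  else nth 0 (sort <=%R [seq cb e | e <- enum E & eb e == b]) (r b).-1.

(* residual requirement r^J_b = max(r_b - deg_J b, 0) (truncated subtraction) *)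
Definition resid (J : {set E}) (b : B) : nat := (r b - degB J b)%N.

Definition Phi (J : {set E}) : R := \sum_(b : B) wB b * (resid J b)%:R.

Definition slope_bound (theta : R) : Prop :=
  forall e, Num.max (ca e) (cb e) <= theta * Num.min (ca e) (cb e).

End Activation.

From HB Require Import structures.
From mathcomp Require Import all_boot all_order all_algebra.
From mathcomp Require Import zify lra.
Set Implicit Arguments. Unset Strict Implicit. Unset Printing Implicit Defensive.
Import Order.TTheory GRing.Theory Num.Theory.
Local Open Scope ring_scope.

(* The proof rests on one property of the
   threshold w_b, the r_b-th smallest cost at b:
   - at least r_b edges at b cost at most w_b (this needs feasibility), and
     w_b <= M as soon as r_b edges at b cost at most M.
   From the second half, every r-edge-cover J0 has l_{J0}(b) >= w_b; from
   the first half and the minimality of F, every edge e in F costs at most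
   w_{eb e} at its B-end.  Hence l_F(b) <= w_b <= l_{J0}(b), giving
   l_F(B) <= opt.  On the A-side, the slope bound gives c^a_e <= theta * w_b
   for e in F incident to b, and since F has exactly r^J_b edges at b,
   l_F(A) <= sum_{e in F} c^a_e <= theta * sum_b w_b r^J_b = theta * Phi(J).
   The cover property follows from |F at b| = r^J_b and F disjoint from J. *)

Section BigMaxZero.
Variables (R : realFieldType) (I : finType) (P : pred I) (f : I -> R).

Lemma bigmax0_ge0 : 0 <= \big[Num.max/0]_(i | P i) f i.
Proof. by rewrite bigmax_idl le_max lexx. Qed.

Lemma bigmax0_le_sum : (forall i, P i -> 0 <= f i) ->
  \big[Num.max/0]_(i | P i) f i <= \sum_(i | P i) f i.
Proof.
move=> f_ge0; apply: bigmax_le => [|i Pi]; first exact: sumr_ge0.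
by rewrite (bigD1 i) //= lerDl sumr_ge0 // => j /andP[/f_ge0].
Qed.

End BigMaxZero.

Section Activation.
Variables (R : realFieldType) (A B E : finType) (ea : E -> A) (eb : E -> B).
Variables (ca cb : E -> R) (r : B -> nat).

Local Notation w := (wB eb cb r).
Local Notation costs_at b := [seq cb e | e <- enum E & eb e == b].

Lemma count_costs_at b (p : pred R) :
  count p (costs_at b) = #|[set e | eb e == b & p (cb e)]|.
Proof.
rewrite count_map count_filter cardE /enum_mem -enumT size_filter.
rewrite (@eq_filter _ _ predT) // filter_predT.
by apply: eq_count => e; rewrite !inE andbC.
Qed.

Lemma wB_cases b : w b = 0 \/ exists e, w b = cb e.
Proof.
rewrite /wB; case: eqP => _; first by left.
set s := sort _ _; case: (ltnP (r b).-1 (size s)) => [lt_s|]; last first.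
  by left; rewrite nth_default.
have : nth 0 s (r b).-1 \in costs_at b by rewrite -(mem_sort <=%R) mem_nth.
by case/mapP => e _ ->; right; exists e.
Qed.

Lemma wB_le b M : (0 < r b)%N ->
  (r b <= #|[set e | eb e == b & (cb e <= M)%R]|)%N -> w b <= M.
Proof.
move=> rb_gt0 rb_le; rewrite /wB (negPf (lt0n_neq0 rb_gt0)).
apply: nth_count_le; first by apply: sort_sorted; exact: le_total.
by rewrite count_sort count_costs_at prednK.
Qed.

Lemma wB_le_ellB_cover (J0 : {set E}) b :
  is_cover eb r J0 -> w b <= ellB_at eb cb J0 b.
Proof.
move=> coverJ0; case: (posnP (r b)) => [rb0|rb_gt0].
  by rewrite /wB rb0 eqxx bigmax0_ge0.
apply: wB_le => //; apply: (leq_trans (coverJ0 b)); apply: subset_leq_card.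
apply/subsetP => e; rewrite !inE => /andP[eJ0 /eqP eb_e]; rewrite eb_e eqxx /=.
apply: (@le_bigmax_cond _ _ _ 0 e (fun e => (e \in J0) && (eb e == b))).
by rewrite eJ0 eb_e eqxx.
Qed.

Lemma ellB_le_cost (J0 : {set E}) : ellB eb cb J0 <= cost ea eb ca cb J0.
Proof. by rewrite /cost lerDr sumr_ge0 // => a _; exact: bigmax0_ge0. Qed.

Hypothesis cb_ge0 : forall e, 0 <= cb e.

Lemma wB_ge0 b : 0 <= w b.
Proof. by have [->|[e ->]] := wB_cases b. Qed.

Hypothesis feasible : is_cover eb r setT.

(* In a feasible instance, any common lower bound on the cost of covers is a
   lower bound on opt (whose default value is the cost of the cover setT). *)
Lemma le_opt x : (forall J0, is_cover eb r J0 -> x <= cost ea eb ca cb J0) ->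
  x <= opt ea eb ca cb r.
Proof.
move=> x_le; apply: (big_ind (fun v => x <= v)) => [||J0 /forallP J0cover].
- exact: x_le feasible.
- by move=> u v xu xv; rewrite le_min xu xv.
- exact: x_le.
Qed.

Lemma count_le_wB b : (0 < r b)%N ->
  (r b <= #|[set e | eb e == b & (cb e <= w b)%R]|)%N.
Proof.
move=> rb_gt0; set s := sort <=%R (costs_at b).
have s_sorted : sorted <=%R s by apply: sort_sorted; exact: le_total.
have size_s : (r b <= size s)%N.
  rewrite size_sort -(count_predT (costs_at b)) count_costs_at.
  apply: leq_trans (feasible b) _; apply: eq_leq; apply: eq_card => e.
  by rewrite !inE andbT.
rewrite leqNgt; apply/negP => lt_count.
have : w b < nth 0 s (r b).-1.
  apply: nth_count_gt => //; rewrite count_sort count_costs_at.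
  by rewrite -ltnS prednK // lt_count; move: size_s; case: (r b) rb_gt0.
by rewrite /wB (negPf (lt0n_neq0 rb_gt0)) ltxx.
Qed.

Section Greedy.
Variables (J F : {set E}).
Hypothesis Fcard : forall b, #|[set e in F | eb e == b]| = resid eb r J b.
Hypothesis Fmin : forall e e', e \in F -> e' \notin J -> e' \notin F ->
  eb e = eb e' -> cb e <= cb e'.

(* J :|: F is a cover: F adds exactly the residual requirement, disjointly. *)
Lemma greedy_cover : F \subset ~: J -> is_cover eb r (J :|: F).
Proof.
move=> FJ b; rewrite /degB.
have -> : [set e in J :|: F | eb e == b] =
    [set e in J | eb e == b] :|: [set e in F | eb e == b].
  by apply/setP => e; rewrite !inE andb_orl.
rewrite cardsU Fcard /resid /degB.
have -> : [set e in J | eb e == b] :&: [set e in F | eb e == b] = set0.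
  apply/setP => e; rewrite !inE; case: (boolP (e \in F)) => eF; last by rewrite !andbF.
  by move/subsetP: FJ => /(_ e eF); rewrite inE => /negPf ->.
rewrite cards0; lia.
Qed.

(* Each greedy edge costs at most the threshold at its B-end: otherwise the
   r_b edges below w_b would all lie in J or in F minus that edge. *)
Lemma greedy_le_wB e : e \in F -> cb e <= w (eb e).
Proof.
move=> eF; set b := eb e.
set Jb := [set e' in J | eb e' == b]; set Fb := [set e' in F | eb e' == b].
have eFb : e \in Fb by rewrite inE eF eqxx.
have resid_gt0 : (0 < resid eb r J b)%N by rewrite -Fcard; apply/card_gt0P; exists e.
have rb_gt0 : (0 < r b)%N by move: resid_gt0; rewrite /resid; lia.
rewrite leNgt; apply/negP => w_lt_e.
have below_sub : [set e' | eb e' == b & cb e' <= w b] \subset Jb :|: (Fb :\ e).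
  apply/subsetP => e' /[!inE] /andP[/eqP e'b e'_le].
  have e'_neq : e' != e by apply: contraTneq e'_le => ->; rewrite -ltNge.
  rewrite e'_neq e'b eqxx !andbT /=.
  case: (boolP (e' \in J)) => //= e'J; apply: contraTT e'_le => e'F.
  by rewrite -ltNge (lt_le_trans w_lt_e) // Fmin // e'b.
have r_le : (r b <= #|Jb| + #|Fb :\ e|)%N.
  apply: leq_trans (count_le_wB rb_gt0) _.
  exact: leq_trans (subset_leq_card below_sub) (leq_card_setU _ _).
have := cardsD1 e Fb; rewrite eFb Fcard.
move: resid_gt0 r_le; rewrite /resid /degB -/Jb; lia.
Qed.

Lemma ellB_at_greedy b : ellB_at eb cb F b <= w b.
Proof.
by apply: bigmax_le => [|e /andP[/greedy_le_wB + /eqP <-]]; first exact: wB_ge0.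
Qed.

Lemma ellB_greedy_le_opt : ellB eb cb F <= opt ea eb ca cb r.
Proof.
apply: le_opt => J0 coverJ0; apply: le_trans (ellB_le_cost J0).
apply: ler_sum => b _; apply: le_trans (ellB_at_greedy b) _.
exact: wB_le_ellB_cover.
Qed.

Lemma sum_wB_greedy : \sum_(e in F) w (eb e) = Phi eb cb r J.
Proof.
rewrite /Phi (partition_big eb xpredT) //; apply: eq_bigr => b _.
rewrite (eq_bigr (fun _ => w b)); last by move=> e /andP[_ /eqP ->].
rewrite -Fcard mulr_natr -sumr_const; apply: eq_bigl => e; by rewrite inE.
Qed.

Section Slope.
Variable theta : R.
Hypothesis ca_ge0 : forall e, 0 <= ca e.
Hypothesis Htheta : slope_bound ca cb theta.

Lemma slope_neg_costs0 e : theta < 0 -> ca e = 0 /\ cb e = 0.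
Proof.
move=> theta_lt0; have := Htheta e; have := ca_ge0 e; have := cb_ge0 e.
have : ca e <= Num.max (ca e) (cb e) by rewrite le_max lexx.
have : cb e <= Num.max (ca e) (cb e) by rewrite le_max lexx orbT.
have : 0 <= Num.min (ca e) (cb e) by rewrite le_min ca_ge0 cb_ge0.
by move=> *; split; nra.
Qed.

Lemma ca_le_theta_cb e : 0 <= theta -> ca e <= theta * cb e.
Proof.
move=> theta_ge0; have := Htheta e; have := ca_ge0 e; have := cb_ge0 e.
by case: (lerP (cb e) (ca e)) => [_ _ _ //|ca_lt *]; nra.
Qed.

Lemma greedy_ca_le e : e \in F -> ca e <= theta * w (eb e).
Proof.
move=> eF; case: (lerP 0 theta) => [theta_ge0|theta_lt0].
  apply: le_trans (ca_le_theta_cb e theta_ge0) _.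
  by rewrite ler_wpM2l // greedy_le_wB.
have [-> _] := slope_neg_costs0 e theta_lt0.
have [->|[e' ->]] := wB_cases (eb e); first by rewrite mulr0.
by have [_ ->] := slope_neg_costs0 e' theta_lt0; rewrite mulr0.
Qed.

Lemma ellA_greedy_le : ellA ea ca F <= theta * Phi eb cb r J.
Proof.
rewrite -sum_wB_greedy mulr_sumr.
apply: le_trans (_ : \sum_(e in F) ca e <= _); last exact: ler_sum greedy_ca_le.
rewrite /ellA (partition_big ea xpredT) //=; apply: ler_sum => a _.
exact: bigmax0_le_sum.
Qed.

End Slope.
End Greedy.
End Activation.

Theorem mainTheorem6 (R : realFieldType) (A B E : finType)
  (ea : E -> A) (eb : E -> B) (ca cb : E -> R) (r : B -> nat)
  (ca_ge0 : forall e, 0 <= ca e) (cb_ge0 : forall e, 0 <= cb e)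
  (feasible : is_cover eb r setT)
  (theta : R) (Htheta : slope_bound ca cb theta)
  (J F : {set E})
  (FJ : F \subset ~: J)
  (Fcard : forall b, #|[set e in F | eb e == b]| = resid eb r J b)
  (Fmin : forall e e', e \in F -> e' \notin J -> e' \notin F ->
            eb e = eb e' -> cb e <= cb e') :
  is_cover eb r (J :|: F) /\
  ellB eb cb F <= opt ea eb ca cb r /\
  ellA ea ca F <= theta * Phi eb cb r J.
Proof.
split; first exact: greedy_cover Fcard FJ.
split; first exact: (ellB_greedy_le_opt ea ca cb_ge0 feasible Fcard Fmin).
exact: (ellA_greedy_le ea cb_ge0 feasible Fcard Fmin ca_ge0 Htheta).
Qed.
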